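(* For every integer $N$, in $\bar k[[t]]$: $\Omega^{(N)}/\Omega^{(-1)}=-\sum_{n\ge0}\Psi_N\big(1/T^{n+1}\big)t^n$ if $N\ge0$, and $\Omega^{(N)}/\Omega^{(-1)}=\prod_{i=1}^{|N|-1}\big(t-T^{q^{-i}}\big)$ if $N<0$.
   Context: $A=\mathbb F_q[T]$, $A_+$ its monic elements, $\bar k$ the algebraic closure of $\mathbb F_q(T)$ in $\mathbb C_\infty$ (completion of an algebraic closure of $\mathbb F_q((1/T))$, $|T|_\infty=q$), $\tilde T$ a fixed $(q-1)$-th root of $-T$. $\Omega(t)=\tilde T^{-q}\prod_{i\ge1}(1-t/T^{q^i})$ (its coefficients lie in $\bar k$). For $g=\sum a_it^i$ and $n\in\mathbb Z$, $g^{(n)}=\sum a_i^{q^n}t^i$. For integers $N\ge0$, $\Psi_N(z)=\prod_{a\in A,\deg a<N}(z-a)\big/\prod_{a\in A_+,\deg a=N}a$ (so $\Psi_0(z)=z$). *)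

From HB Require Import structures.
From mathcomp Require Import all_boot all_order all_algebra.
From mathcomp Require Import reals.
Set Implicit Arguments. Unset Strict Implicit. Unset Printing Implicit Defensive.
Import Order.TTheory GRing.Theory Num.Theory.
Local Open Scope ring_scope.

Section Defs.
Variables (R : realType) (C : fieldType) (Fq : finFieldType).
Variable (emb : {rmorphism Fq -> C}).
Variable (abs : C -> R).

(* Formal power series in t over C: coefficient sequences nat -> C. *)
Definition fps_mul (f g : nat -> C) : nat -> C :=
  fun n => \sum_(k < n.+1) f k * g (n - k)%N.

Definition conv (s : nat -> C) (l : C) : Prop :=
  forall eps : R, 0 < eps -> exists M : nat, forall m, (M <= m)%N -> abs (s m - l) < eps.

Definition cauchy (s : nat -> C) : Prop :=
  forall eps : R, 0 < eps -> exists M : nat,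
    forall m n, (M <= m)%N -> (M <= n)%N -> abs (s m - s n) < eps.

Definition complete_nonarch_abs : Prop :=
  [/\ forall x, (abs x == 0) = (x == 0),
      forall x, 0 <= abs x,
      forall x y, abs (x * y) = abs x * abs y,
      forall x y, abs (x + y) <= Num.max (abs x) (abs y)
    & forall s, cauchy s -> exists l, conv s l].

Variable T : C.

(* image in C of a in A = F_q[T] *)
Definition evA (a : {poly Fq}) : C := (map_poly emb a).[T].

(* x lies in kbar = the algebraic closure of F_q(T) inside C *)
Definition in_kbar (x : C) : Prop :=
  exists p : {poly C}, [/\ p != 0, root p x & forall i, exists a : {poly Fq}, p`_i = evA a].

Definition kbar_dense : Prop :=
  forall (x : C) (eps : R), 0 < eps -> exists y, in_kbar y /\ abs (x - y) < eps.

Definition q := #|Fq|.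

(* Psi_N(z) = prod_{a in A, deg a < N} (z - a) / prod_{a in A_+, deg a = N} a;
   polynomials of degree < N are rVpoly v for v : 'rV[Fq]_N, monic ones of degree N
   are 'X^N + rVpoly v. *)
Definition Psi (N : nat) (z : C) : C :=
  (\prod_(v : 'rV[Fq]_N) (z - evA (rVpoly v))) /
  (\prod_(v : 'rV[Fq]_N) evA ('X^N + rVpoly v)).

(* h = g^{(n)}: coefficientwise q^n-th power (for n < 0: h_i is the (unique)
   q^{|n|}-th root of g_i, i.e. h_i^(q^|n|) = g_i). *)
Definition twist (n : int) (g h : nat -> C) : Prop :=
  match n with
  | Posz m => forall i, h i = g i ^+ (q ^ m)
  | Negz m => forall i, h i ^+ (q ^ m.+1) = g i
  end.

(* w is (the coefficient sequence of) Omega(t) = tT^{-q} prod_{i>=1} (1 - t/T^{q^i}),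
   the infinite product being the coefficientwise limit of the partial products. *)
Definition is_Omega (tT : C) (w : nat -> C) : Prop :=
  forall n, conv (fun m => ((tT ^- q) *: \prod_(1 <= i < m.+1) (1 - (T ^+ (q ^ i))^-1 *: 'X))`_n) (w n).

End Defs.

(* Twisting Omega = tT^-q prod_(i >= 1) (1 - t / T^(q^i)) by the Frobenius shifts its
   factors, and tT^(q-1) = -T makes the constants match, so that for every L >= 0
     prod_(i = 1..L) (t - T^(q^i)) * Omega^(L) = Omega.
   For N < 0 this is the claim raised to the q^|N|-th power, since r_i^(q^|N|) = T^(q^(|N|-i)).
   For N >= 0, Psi_N is the F_q-linear polynomial sum_(j <= N) alpha_j z^(q^j), where the
   alpha_j are the leading coefficients of the Lagrange basis at the nodes T^(q^j), j <= N:
   it vanishes on the polynomials of degree < N and takes the value 1 at T^N, hence has the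
   right roots and normalisation.  Therefore
     -sum_n Psi_N(T^-(n+1)) t^n = sum_(j <= N) alpha_j / (t - T^(q^j))
                               = 1 / prod_(j <= N) (t - T^(q^j))
   by partial fractions, and after one Frobenius twist the identity above with L = N + 1
   gives Omega^(N+1) = Psi-series^(1) * Omega, i.e. the claim twisted once. *)

From Pilot Require Import Defs.
From HB Require Import structures.
From mathcomp Require Import all_boot all_order all_algebra finfield.
From mathcomp Require Import reals boolp.
From mathcomp Require Import ring zify.
Set Implicit Arguments. Unset Strict Implicit. Unset Printing Implicit Defensive.
Import Order.TTheory GRing.Theory Num.Theory.
Local Open Scope ring_scope.

Section PowerFrobenius.
Variables (R : comNzRingType) (n : nat) (chn : [pchar R].-nat n).

Definition pnatFrobenius of [pchar R].-nat n := fun x : R => x ^+ n.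

Lemma pnatFrobeniusE x : pnatFrobenius chn x = x ^+ n.
Proof. by []. Qed.

Fact pnatFrobenius_is_nmod_morphism : nmod_morphism (pnatFrobenius chn).
Proof.
split=> [|x y]; last exact: exprDn_pchar.
by case/andP: chn => n_gt0 _; rewrite pnatFrobeniusE expr0n gtn_eqF.
Qed.

Fact pnatFrobenius_is_monoid_morphism : monoid_morphism (pnatFrobenius chn).
Proof. by split=> [|x y]; rewrite !pnatFrobeniusE (expr1n, exprMn). Qed.

HB.instance Definition _ := GRing.isNmodMorphism.Build R R (pnatFrobenius chn)
  pnatFrobenius_is_nmod_morphism.
HB.instance Definition _ := GRing.isMonoidMorphism.Build R R (pnatFrobenius chn)
  pnatFrobenius_is_monoid_morphism.

End PowerFrobenius.

Lemma pnatFrobenius_inj (R : idomainType) n (chn : [pchar R].-nat n) :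
  injective (pnatFrobenius chn).
Proof.
move=> x y /eqP; rewrite -subr_eq0 -rmorphB /= pnatFrobeniusE expf_eq0.
by rewrite subr_eq0 => /andP[_ /eqP].
Qed.

Section FiniteSubfield.
Variables (C : fieldType) (Fq : finFieldType) (emb : {rmorphism Fq -> C}).
Local Notation q := (q Fq).

Lemma q_gt1 : (1 < q)%N.
Proof. exact: finNzRing_gt1. Qed.

Lemma pnat_q : [pchar C].-nat q.
Proof.
have [p _ chFp] := finPcharP Fq.
rewrite (eq_pnat _ (pcharf_eq (rmorph_pchar emb chFp))) /q.
by rewrite (card_pprimeChar chFp) pnatX pnat_id ?(pcharf_prime chFp).
Qed.

Lemma pnat_qX L : [pchar C].-nat (q ^ L)%N.
Proof. by rewrite pnatX pnat_q. Qed.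

Lemma emb_qX L c : emb c ^+ (q ^ L) = emb c.
Proof.
rewrite -rmorphXn; congr (emb _); elim: L => [|L IH]; first by rewrite expr1.
by rewrite expnSr exprM IH expf_card.
Qed.

End FiniteSubfield.

Section AbsoluteValue.
Variables (R : realType) (C : fieldType) (abs : C -> R).
Hypothesis habs : complete_nonarch_abs abs.

Lemma abs_eq0 x : (abs x == 0) = (x == 0). Proof. by case: habs. Qed.
Lemma abs_ge0 x : 0 <= abs x. Proof. by case: habs. Qed.
Lemma absM x y : abs (x * y) = abs x * abs y. Proof. by case: habs. Qed.
Lemma abs_addr_max x y : abs (x + y) <= Num.max (abs x) (abs y). Proof. by case: habs. Qed.

Lemma abs0 : abs 0 = 0. Proof. by apply/eqP; rewrite abs_eq0. Qed.

Lemma abs1 : abs 1 = 1.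
Proof.
have abs1_neq0 : abs 1 != 0 by rewrite abs_eq0 oner_eq0.
by apply: (mulfI abs1_neq0); rewrite -absM !mulr1.
Qed.

Lemma absX x n : abs (x ^+ n) = abs x ^+ n.
Proof. by elim: n => [|n IH]; rewrite ?abs1 // !exprS absM IH. Qed.

Lemma absN x : abs (- x) = abs x.
Proof.
suff absN1 : abs (-1) = 1 by rewrite -mulN1r absM absN1 mul1r.
have /eqP : abs (-1) ^+ 2 = 1 by rewrite -absX sqrrN expr1n abs1.
rewrite sqrf_eq1 => /orP[/eqP // | /eqP absN1].
by have := abs_ge0 (-1); rewrite absN1 ler0N1.
Qed.

Lemma abs_addr_lt x y e : abs x < e -> abs y < e -> abs (x + y) < e.
Proof. by move=> ltx lty; apply: le_lt_trans (abs_addr_max x y) _; rewrite gt_max ltx lty. Qed.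

Lemma abs_sum_lt (I : Type) (r : seq I) (P : pred I) (F : I -> C) e : 0 < e ->
  (forall i, P i -> abs (F i) < e) -> abs (\sum_(i <- r | P i) F i) < e.
Proof.
move=> e_gt0 ltF; elim/big_rec: _ => [|i x Pi ltx]; first by rewrite abs0.
exact: abs_addr_lt (ltF i Pi) ltx.
Qed.

Lemma addr_abs_dom_neq0 x y : abs x < abs y -> x + y != 0.
Proof. by move=> lt_xy; rewrite addr_eq0; apply: contraTN lt_xy => /eqP->; rewrite absN ltxx. Qed.

Lemma conv_uniq s l1 l2 : conv abs s l1 -> conv abs s l2 -> l1 = l2.
Proof.
move=> cv1 cv2; apply/eqP; rewrite -subr_eq0 -abs_eq0 eq_le abs_ge0 andbT.
apply/ler_addgt0Pr => e e_gt0; rewrite add0r.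
have [M1 HM1] := cv1 e e_gt0; have [M2 HM2] := cv2 e e_gt0.
set m := maxn M1 M2; have -> : l1 - l2 = (s m - l2) - (s m - l1) by ring.
by apply/ltW/abs_addr_lt; rewrite ?absN; [apply: HM2 | apply: HM1]; lia.
Qed.

Lemma conv_eq_ev s u l K :
  (forall m, (K <= m)%N -> s m = u m) -> conv abs s l -> conv abs u l.
Proof.
move=> eq_su cv e e_gt0; have [M HM] := cv e e_gt0.
by exists (maxn M K) => m le_m; rewrite -eq_su; [apply: HM |]; lia.
Qed.

Lemma conv_shift s l K : conv abs (fun m => s (m + K)%N) l <-> conv abs s l.
Proof.
split=> cv e e_gt0; have [M HM] := cv e e_gt0.
  exists (M + K)%N => m le_m; rewrite -(subnK (leq_trans (leq_addl M K) le_m)).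
  by apply: HM; lia.
by exists M => m le_m; apply: HM; lia.
Qed.

Lemma conv_cst l : conv abs (fun=> l) l.
Proof. by move=> e e_gt0; exists 0%N => m _; rewrite subrr abs0. Qed.

Lemma conv_add s u l k : conv abs s l -> conv abs u k ->
  conv abs (fun m => s m + u m) (l + k).
Proof.
move=> cvs cvu e e_gt0; have [M1 HM1] := cvs e e_gt0; have [M2 HM2] := cvu e e_gt0.
exists (maxn M1 M2) => m le_m; rewrite opprD addrACA.
by apply: abs_addr_lt; [apply: HM1 | apply: HM2]; lia.
Qed.

Lemma conv_sum (I : Type) (r : seq I) (F : I -> nat -> C) (L : I -> C) :
  (forall i, conv abs (F i) (L i)) ->
  conv abs (fun m => \sum_(i <- r) F i m) (\sum_(i <- r) L i).
Proof.
move=> cvF; elim: r => [|i r IH].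
  by rewrite big_nil; apply: (conv_eq_ev (K := 0)) (conv_cst 0) => m _; rewrite big_nil.
rewrite big_cons; apply: (conv_eq_ev (K := 0)) (conv_add (cvF i) IH) => m _.
by rewrite big_cons.
Qed.

Lemma conv_mull c s l : conv abs s l -> conv abs (fun m => c * s m) (c * l).
Proof.
move=> cv e e_gt0.
have c1_gt0 : 0 < abs c + 1 by rewrite ltr_wpDl ?abs_ge0.
have [M HM] := cv (e / (abs c + 1)) (divr_gt0 e_gt0 c1_gt0).
exists M => m le_m; rewrite -mulrBr absM.
apply: (@le_lt_trans _ _ ((abs c + 1) * abs (s m - l))).
  by rewrite ler_wpM2r ?abs_ge0 // lerDl ler01.
by rewrite mulrC -ltr_pdivlMr // HM.
Qed.

Lemma conv_fps_mul f (G : nat -> nat -> C) (H : nat -> C) n :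
  (forall j, conv abs (G^~ j) (H j)) ->
  conv abs (fun m => fps_mul f (G m) n) (fps_mul f H n).
Proof. by move=> cvG; apply: conv_sum => k; apply: conv_mull. Qed.

(* [x ^+ n] is additive, and [abs (x ^+ n) <= abs x] once [abs x <= 1]. *)
Lemma conv_pnatFrobenius n (chn : [pchar C].-nat n) s l :
  conv abs s l -> conv abs (pnatFrobenius chn \o s) (pnatFrobenius chn l).
Proof.
move=> cv e e_gt0; have min_gt0 : 0 < Num.min e 1 by rewrite lt_min e_gt0 ltr01.
have [M HM] := cv _ min_gt0.
exists M => m le_m; have := HM m le_m; rewrite lt_min => /andP[lt_e lt_1] /=.
rewrite -rmorphB /= pnatFrobeniusE absX; apply: le_lt_trans lt_e.
case/andP: chn; case: n => // n _ _; rewrite exprS ler_piMr ?abs_ge0 //.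
by rewrite exprn_ile1 ?abs_ge0 ?ltW.
Qed.

End AbsoluteValue.

Section PowerSeries.
Variable C : fieldType.
Implicit Types (f g h : nat -> C) (p r : {poly C}).

Lemma fps_mul_coef p r : fps_mul (fun n => p`_n) (fun n => r`_n) = fun n => (p * r)`_n.
Proof. by apply: funext => n; rewrite coefM. Qed.

Lemma fps_mul_trunc f g n k : (k <= n)%N ->
  fps_mul f g k = (\poly_(i < n.+1) f i * \poly_(i < n.+1) g i)`_k.
Proof.
move=> le_kn; rewrite coefM; apply: eq_bigr => -[j /= lt_jk] _.
by rewrite !coef_poly !ifT //; lia.
Qed.

Lemma fps_mulA f g h : fps_mul (fps_mul f g) h = fps_mul f (fps_mul g h).
Proof.
apply: funext => n; pose tr u := \poly_(i < n.+1) u i : {poly C}.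
have trE u k : (k <= n)%N -> (tr u)`_k = u k by move=> le_kn; rewrite coef_poly ltnS le_kn.
transitivity ((tr f * tr g * tr h)`_n); last rewrite -mulrA; rewrite coefM;
  apply: eq_bigr => -[k /= lt_kn] _; rewrite -fps_mul_trunc ?trE //; lia.
Qed.

Lemma fps_mul1l g : fps_mul (fun n => (n == 0)%:R) g = g.
Proof.
apply: funext => n; rewrite /fps_mul big_ord_recl mul1r subn0 big1 ?addr0 //.
by move=> i _; rewrite mul0r.
Qed.

Lemma fps_mulZl c f g : fps_mul (fun n => c * f n) g = fun n => c * fps_mul f g n.
Proof. by apply: funext => n; rewrite mulr_sumr; apply: eq_bigr => k _; rewrite mulrA. Qed.

Lemma fps_mul_suml (I : Type) (r : seq I) (F : I -> nat -> C) g :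
  fps_mul (fun n => \sum_(i <- r) F i n) g = fun n => \sum_(i <- r) fps_mul (F i) g n.
Proof.
apply: funext => n; rewrite /fps_mul exchange_big /=.
by apply: eq_bigr => k _; rewrite mulr_suml.
Qed.

Lemma rmorph_fps_mul (phi : {rmorphism C -> C}) f g n :
  phi (fps_mul f g n) = fps_mul (phi \o f : nat -> C) (phi \o g) n.
Proof. by rewrite rmorph_sum; apply: eq_bigr => k _; rewrite rmorphM. Qed.

Lemma fps_mul_geom_XsubC (y : C) : y != 0 ->
  fps_mul (fun n => - y ^- n.+1) (fun n => ('X - y%:P)`_n) = fun n => (n == 0)%:R.
Proof.
have coefXsubC j : ('X - y%:P)`_j = if j == 0%N then - y else (j == 1%N)%:R.
  by rewrite coefB coefX coefC; case: j => [|[|j]] /=; rewrite ?sub0r ?subr0 ?oppr0.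
move=> y_neq0; apply: funext => -[|n].
  by rewrite /fps_mul big_ord1 coefXsubC /= expr1 mulrNN mulVf.
rewrite /fps_mul !big_ord_recr big1 /= ?add0r => [|k _]; last first.
  by rewrite coefXsubC subSn ?(ltnW (ltn_ord k)) //= eqSS subn_eq0 leqNgt ltn_ord mulr0.
rewrite subSnn subnn !coefXsubC /= mulr1 mulrNN.
suff -> : y ^- n.+2 * y = y ^- n.+1 by rewrite addNr.
by rewrite exprS invfM mulrAC mulVf ?mul1r.
Qed.

End PowerSeries.

Section Lagrange.
Variables (K : fieldType) (n : nat) (x : nat -> K).
Hypotheses (n_gt0 : (0 < n)%N) (x_inj : injective x).
Local Notation lagr i := (tnth (@lagrange K n x) i : {poly K}).

Lemma lead_coef_lagrange_neq0 i : lead_coef (lagr i) != 0.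
Proof. by rewrite lead_coef_eq0 -size_poly_eq0 size_lagrange_ // -lt0n. Qed.

(* Partial fractions for [1 / prod_j (t - x j)]. *)
Lemma sum_lagrange_prod :
  \sum_(i < n) lead_coef (lagr i) *: \prod_(j < n | j != i) ('X - (x j)%:P) = 1.
Proof.
rewrite [RHS](lagrange_gen n_gt0 x_inj) ?size_poly1 //; apply: eq_bigr => i _.
rewrite hornerC mul1r lagrangeE //= lead_coefM lead_coefC lead_coef_prod_XsubC mulr1.
by rewrite mul_polyC.
Qed.

(* Compare the coefficients of degree [n.-1] in the interpolation of ['X^k]. *)
Lemma lagrange_moment k : (k < n)%N ->
  \sum_(i < n) x i ^+ k * lead_coef (lagr i) = (k == n.-1)%:R.
Proof.
move=> lt_kn; have le_kn : (size ('X^k : {poly K}) <= n)%N by rewrite size_polyXn.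
have := congr1 (fun p : {poly K} => p`_n.-1) (lagrange_gen n_gt0 x_inj le_kn).
rewrite coefXn coef_sum eq_sym => ->; apply: eq_bigr => i _.
by rewrite coefCM hornerXn lead_coefE size_lagrange_.
Qed.

End Lagrange.

Section CarlitzModule.
Variables (R : realType) (C : fieldType) (Fq : finFieldType) (emb : {rmorphism Fq -> C}).
Variables (abs : C -> R) (T : C).
Hypotheses (habs : complete_nonarch_abs abs) (hT : abs T = (q Fq)%:R).
Local Notation q := (q Fq).
Local Notation evA := (evA emb T).

Lemma absT_gt1 : 1 < abs T.
Proof. by rewrite hT ltr1n (q_gt1 Fq). Qed.

Lemma T_neq0 : T != 0.
Proof. by rewrite -(abs_eq0 habs) gt_eqF // (lt_trans ltr01 absT_gt1). Qed.

Lemma Tq_neq0 i : T ^+ (q ^ i) != 0.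
Proof. by rewrite expf_neq0 // T_neq0. Qed.

Lemma Tq_inj : injective (fun i => T ^+ (q ^ i)).
Proof.
move=> i j /(congr1 abs); rewrite !(absX habs) hT -!natrX => /eqP.
by rewrite eqr_nat => /eqP /(expnI (q_gt1 Fq)) /(expnI (q_gt1 Fq)).
Qed.

Lemma abs_emb c : c != 0 -> abs (emb c) = 1.
Proof.
move=> c_neq0; have abs_neq0 : abs (emb c) != 0 by rewrite (abs_eq0 habs) fmorph_eq0.
have /eqP : abs (emb c) ^+ q.-1 = 1.
  apply: (mulfI abs_neq0); rewrite -exprS prednK ?(ltnW (q_gt1 Fq)) // mulr1.
  by rewrite -(absX habs) -rmorphXn expf_card.
by rewrite pexpr_eq1 ?(abs_ge0 habs) -?subn1 ?subn_gt0 ?(q_gt1 Fq) // => /eqP.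
Qed.

Lemma abs_emb_le1 c : abs (emb c) <= 1.
Proof. by have [->|/abs_emb->] := eqVneq c 0; rewrite ?rmorph0 ?(abs0 habs) ?ler01. Qed.

(* The leading monomial of [a] dominates the others, as [abs T > 1]. *)
Lemma evA_neq0 a : a != 0 -> evA a != 0.
Proof.
move=> a_neq0; rewrite /Defs.evA horner_coef size_map_poly.
have -> : size a = (size a).-1.+1 by rewrite prednK // size_poly_gt0.
rewrite big_ord_recr /=; apply: (addr_abs_dom_neq0 habs).
rewrite (absM habs) (absX habs) coef_map abs_emb -?lead_coefE ?lead_coef_eq0 // mul1r.
apply: (abs_sum_lt habs) => [|i _]; first by rewrite exprn_gt0 // (lt_trans ltr01 absT_gt1).
rewrite (absM habs) (absX habs) coef_map; apply: le_lt_trans (ler_piMl _ _) _.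
- by rewrite exprn_ge0 ?(abs_ge0 habs).
- exact: abs_emb_le1.
by rewrite ltr_eXn2l ?absT_gt1.
Qed.

Lemma evAB a b : evA (a - b) = evA a - evA b.
Proof. by rewrite /Defs.evA rmorphB hornerD hornerN. Qed.

Lemma evA_inj : injective evA.
Proof.
move=> a b eq_ab; apply/eqP; rewrite -subr_eq0; apply: contraTT isT => /evA_neq0.
by rewrite evAB eq_ab subrr eqxx.
Qed.

Section PsiPolynomial.
Variable M : nat.
Local Notation lagr := (@lagrange C M.+1 (fun i => T ^+ (q ^ i))).
Local Notation alpha j := (lead_coef (tnth lagr j : {poly C})).

Definition Psi_poly : {poly C} := \sum_(j < M.+1) alpha j *: 'X^(q ^ j).

Lemma horner_Psi_poly z : Psi_poly.[z] = \sum_(j < M.+1) alpha j * z ^+ (q ^ j).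
Proof. by rewrite horner_sum; apply: eq_bigr => j _; rewrite hornerZ hornerXn. Qed.

(* [Psi_poly] is [F_q]-linear and the interpolation weights [alpha] make it send
   [T ^+ k] to [(k == M)%:R] for [k <= M]. *)
Lemma Psi_poly_evA (a : {poly Fq}) : (size a <= M.+1)%N -> Psi_poly.[evA a] = emb a`_M.
Proof.
move=> size_a; rewrite horner_Psi_poly /Defs.evA (@horner_coef_wide _ M.+1) ?size_map_poly //.
have frobE j x : x ^+ (q ^ j) = pnatFrobenius (pnat_qX emb j) x by [].
have monomial (i : 'I_M.+1) : \sum_(j < M.+1) alpha j *
    pnatFrobenius (pnat_qX emb j) ((map_poly emb a)`_i * T ^+ i) = emb a`_i * ((i : nat) == M)%:R.
  rewrite -(lagrange_moment _ Tq_inj (ltn_ord i)) // mulr_sumr; apply: eq_bigr => j _.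
  by rewrite rmorphM /= !pnatFrobeniusE coef_map emb_qX exprAC; ring.
under eq_bigr => j _ do rewrite frobE rmorph_sum mulr_sumr.
rewrite exchange_big /=; under eq_bigr => i _ do rewrite monomial.
rewrite big_ord_recr /= eqxx mulr1 big1 ?add0r // => i _.
by rewrite ltn_eqF ?mulr0.
Qed.

Lemma size_Psi_poly : size Psi_poly = (q ^ M).+1.
Proof.
have alphaM_neq0 : alpha ord_max != 0 by apply: (lead_coef_lagrange_neq0 _ Tq_inj).
rewrite /Psi_poly big_ord_recr /= addrC size_polyDl size_scale ?size_polyXn //.
rewrite ltnS; apply: leq_trans (size_sum _ _ _) _; apply/bigmax_leqP => j _.
apply: leq_trans (size_scale_leq _ _) _.
by rewrite size_polyXn ltn_exp2l ?(q_gt1 Fq).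
Qed.

Lemma Psi_poly_prod :
  Psi_poly = lead_coef Psi_poly *: \prod_(v : 'rV[Fq]_M) ('X - (evA (rVpoly v))%:P).
Proof.
set w := fun v : 'rV[Fq]_M => evA (rVpoly v).
have card_rV : size (index_enum 'rV[Fq]_M) = (q ^ M)%N.
  by transitivity #|{: 'rV[Fq]_M}|; [rewrite cardT enumT | rewrite card_mx mul1n].
rewrite -(big_map w xpredT (fun z => 'X - z%:P)); apply: all_roots_prod_XsubC.
- by rewrite size_Psi_poly size_map card_rV.
- apply/allP => _ /mapP[v _ ->]; rewrite /root Psi_poly_evA ?nth_default ?rmorph0 //.
    exact: size_poly.
  exact: leq_trans (size_poly _ _) _.
rewrite uniq_rootsE map_inj_uniq ?index_enum_uniq // => v v' /evA_inj.
exact: (can_inj rVpolyK).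
Qed.

Lemma Psi_polyE z : Psi emb T M z = Psi_poly.[z].
Proof.
set w := fun v : 'rV[Fq]_M => evA (rVpoly v).
have evAXn : evA 'X^M = T ^+ M by rewrite /Defs.evA map_polyXn hornerXn.
have horner_prod_w x : (\prod_v ('X - (w v)%:P)).[x] = \prod_v (x - w v).
  by rewrite horner_prod; under eq_bigr do rewrite hornerXsubC.
have den : \prod_(v : 'rV[Fq]_M) evA ('X^M + rVpoly v) = \prod_v (T ^+ M - w v).
  by rewrite (reindex_inj (@oppr_inj _)); apply: eq_bigr => v _; rewrite linearN evAB evAXn.
have Psi_poly_TM : Psi_poly.[T ^+ M] = 1.
  by rewrite -evAXn Psi_poly_evA ?size_polyXn // coefXn eqxx rmorph1.
have den_inv : lead_coef Psi_poly * \prod_v (T ^+ M - w v) = 1.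
  by rewrite -[RHS]Psi_poly_TM [in RHS]Psi_poly_prod hornerZ horner_prod_w.
have den_neq0 : \prod_v (T ^+ M - w v) != 0.
  by apply/eqP => den0; move: den_inv; rewrite den0 mulr0 => /eqP; rewrite eq_sym oner_eq0.
rewrite /Psi den Psi_poly_prod hornerZ horner_prod_w mulrC; congr (_ * _).
by apply: (mulIf den_neq0); rewrite mulVf.
Qed.

(* Partial fractions: [-sum_n Psi_M (T^-(n+1)) t^n = sum_j alpha_j / (t - T^(q^j))]. *)
Lemma fps_mul_Psi_nodes :
  fps_mul (fun n => - Psi emb T M (T ^- n.+1))
          (fun n => (\prod_(i < M.+1) ('X - (T ^+ (q ^ i))%:P))`_n) = fun n => (n == 0)%:R.
Proof.
have PsiE n : - Psi emb T M (T ^- n.+1) =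
    \sum_(j < M.+1) alpha j * - (T ^+ (q ^ j)) ^- n.+1.
  rewrite Psi_polyE horner_Psi_poly -sumrN; apply: eq_bigr => j _.
  by rewrite mulrN exprVn exprAC.
have geomE (j : 'I_M.+1) : fps_mul (fun n => - (T ^+ (q ^ j)) ^- n.+1)
    (fun n => (\prod_(i < M.+1) ('X - (T ^+ (q ^ i))%:P))`_n) =
    fun n => (\prod_(i < M.+1 | i != j) ('X - (T ^+ (q ^ i))%:P))`_n.
  rewrite (bigD1 j) //= -fps_mul_coef -fps_mulA fps_mul_geom_XsubC ?Tq_neq0 //.
  exact: fps_mul1l.
under eq_fun do rewrite PsiE; rewrite fps_mul_suml; apply: funext => n.
under eq_bigr do rewrite fps_mulZl geomE.
transitivity ((\sum_(j < M.+1) alpha j *: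
    \prod_(i < M.+1 | i != j) ('X - (T ^+ (q ^ i))%:P))`_n).
  by rewrite coef_sum; apply: eq_bigr => j _; rewrite coefZ.
by rewrite (sum_lagrange_prod _ Tq_inj) ?coef1.
Qed.

End PsiPolynomial.

End CarlitzModule.

Section Omega.
Variables (R : realType) (C : fieldType) (Fq : finFieldType) (emb : {rmorphism Fq -> C}).
Variables (abs : C -> R) (T tT : C) (Omega : nat -> C).
Hypotheses (habs : complete_nonarch_abs abs) (hT : abs T = (q Fq)%:R).
Hypotheses (htT : tT ^+ (q Fq).-1 = - T) (hOmega : is_Omega Fq abs T tT Omega).
Local Notation q := (q Fq).
Local Notation Frob L := (pnatFrobenius (pnat_qX emb L)).
Local Notation c := (tT ^- q).
Local Notation factor i := (1 - (T ^+ (q ^ i))^-1 *: 'X).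

Lemma conv_Omega_twist L n : conv abs
  (fun m => (c ^+ (q ^ L) *: \prod_(1 <= i < m.+1) factor (i + L))`_n) (Omega n ^+ (q ^ L)).
Proof.
apply: (conv_eq_ev (K := 0)) (conv_pnatFrobenius habs (pnat_qX emb L) (hOmega n)) => m _.
have -> : \prod_(1 <= i < m.+1) factor (i + L) =
    map_poly (Frob L) (\prod_(1 <= i < m.+1) factor i).
  rewrite rmorph_prod; apply: eq_bigr => i _.
  by rewrite rmorphB rmorph1 /= map_polyZ map_polyX /= pnatFrobeniusE exprVn -exprM -expnD.
by rewrite -[c ^+ _](pnatFrobeniusE (pnat_qX emb L)) -map_polyZ coef_map.
Qed.

Lemma twist_const L : c ^+ (q ^ L) * \prod_(i < L) (- T ^+ (q ^ i.+1)) = c.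
Proof.
have frob1N (x : C) : (- x) ^+ q = - x ^+ q.
  by have := rmorphN (Frob 1) x; rewrite /= !pnatFrobeniusE expn1.
have c_pred : c ^+ q.-1 * - T ^+ q = 1.
  by rewrite exprVn -exprM mulnC exprM htT -frob1N mulVf // expf_neq0 // oppr_eq0 (T_neq0 habs hT).
elim: L => [|L IH]; first by rewrite expn0 expr1 big_ord0 mulr1.
rewrite big_ord_recl expnSr exprM mulrCA.
have -> : \prod_(i < L) - T ^+ (q ^ (bump 0 i).+1) = (\prod_(i < L) - T ^+ (q ^ i.+1)) ^+ q.
  by rewrite -prodrXl; apply: eq_bigr => i _; rewrite frob1N -exprM -expnSr.
have c_q : c ^+ q = c * c ^+ q.-1 by rewrite -exprS prednK // ltnW // q_gt1.
by rewrite -exprMn IH c_q mulrCA [_ * c ^+ _]mulrC expn1 c_pred mulr1.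
Qed.

Lemma XsubC_factor (y : C) : y != 0 -> 'X - y%:P = (- y) *: (1 - y^-1 *: 'X).
Proof.
by move=> y_neq0; rewrite scalerBr scalerA mulNr mulfV // scaleN1r opprK alg_polyC polyCN addrC.
Qed.

Local Notation nodes_prod L := (\prod_(1 <= i < L.+1) ('X - (T ^+ (q ^ i))%:P)).

(* [prod_(i=1..L) (t - T^(q^i)) * Omega^(L) = Omega]: the first [L] factors of
   [Omega] are the ones missing from [Omega^(L)], up to the constant [twist_const]. *)
Lemma fps_mul_nodes_Omega_twist L :
  fps_mul (fun n => (nodes_prod L)`_n) (fun n => Omega n ^+ (q ^ L)) = Omega.
Proof.
have nodes_prodE : nodes_prod L =
    \prod_(i < L) (- T ^+ (q ^ i.+1)) *: \prod_(1 <= i < L.+1) factor i.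
  rewrite !big_add1 /= !big_mkord -scaler_prod; apply: eq_bigr => i _.
  by rewrite XsubC_factor // (Tq_neq0 habs hT).
apply: funext => n; apply: (conv_uniq habs (conv_fps_mul habs _ n (conv_Omega_twist L))).
apply: (conv_eq_ev (K := 0)) ((conv_shift abs _ _ L).2 (hOmega n)) => m _.
rewrite fps_mul_coef /= nodes_prodE -scalerAl -scalerAr scalerA mulrC twist_const.
rewrite (@big_cat_nat _ _ _ L.+1) ?ltnS ?leq_addl //= -[L.+1]/(1 + L)%N big_addn.
by rewrite (_ : ((m + L).+1 - L = m.+1)%N) //; lia.
Qed.

Lemma twist_Omega_neg M (OmegaN OmegaM1 r : nat -> C) :
  twist Fq (Negz M) Omega OmegaN -> twist Fq (-1) Omega OmegaM1 ->
  (forall i, r i ^+ (q ^ i) = T) ->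
  OmegaN = fps_mul (fun n => (\prod_(1 <= i < M.+1) ('X - (r i)%:P))`_n) OmegaM1.
Proof.
move=> hN hM1 hr; apply: funext => n; apply: (@pnatFrobenius_inj C _ (pnat_qX emb M.+1)).
rewrite rmorph_fps_mul /= pnatFrobeniusE hN -[in LHS](fps_mul_nodes_Omega_twist M).
congr fps_mul; apply: funext => k /=; rewrite pnatFrobeniusE; last first.
  by rewrite expnS exprM -(expn1 q) hM1.
rewrite -(pnatFrobeniusE (pnat_qX emb M.+1)) -coef_map rmorph_prod [in RHS]big_nat_rev /=.
apply: (congr1 (fun p : {poly C} => p`_k)); apply: eq_big_nat => i /andP[i_ge1 lt_iM].
rewrite map_polyXsubC /= pnatFrobeniusE.
have -> : (q ^ M.+1 = q ^ (1 + M.+1 - i.+1) * q ^ i)%N by rewrite -expnD add1n subSS subnK // ltnW.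
by rewrite exprM hr.
Qed.

Lemma twist_Omega_nonneg M (OmegaN OmegaM1 : nat -> C) :
  twist Fq (Posz M) Omega OmegaN -> twist Fq (-1) Omega OmegaM1 ->
  OmegaN = fps_mul (fun n => - Psi emb T M (T ^- n.+1)) OmegaM1.
Proof.
move=> hN hM1; apply: funext => n; apply: (@pnatFrobenius_inj C _ (pnat_qX emb 1)).
set f := fun n => - Psi emb T M (T ^- n.+1).
have Frob_OmegaM1 : Frob 1 \o OmegaM1 = Omega by apply: funext => k; exact: hM1.
have Frob_f_inv : fps_mul (Frob 1 \o f) (fun k => (nodes_prod M.+1)`_k) = fun k => (k == 0)%:R.
  apply: funext => k; have := congr1 (fun g => Frob 1 (g k)) (fps_mul_Psi_nodes emb habs hT M).
  rewrite /= rmorph_fps_mul rmorph_nat => <-; congr fps_mul; apply: funext => j /=.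
  rewrite -coef_map rmorph_prod big_add1 big_mkord /=; apply: (congr1 (fun p : {poly C} => p`_j)).
  by apply: eq_bigr => i _; rewrite map_polyXsubC /= pnatFrobeniusE -exprM -expnSr.
rewrite rmorph_fps_mul Frob_OmegaM1 -(fps_mul_nodes_Omega_twist M.+1) -fps_mulA Frob_f_inv.
by rewrite fps_mul1l /= pnatFrobeniusE hN -exprM -expnSr.
Qed.

End Omega.

Theorem lemma5 (R : realType) (C : closedFieldType) (Fq : finFieldType)
  (emb : {rmorphism Fq -> C}) (abs : C -> R) (T tT : C)
  (habs : complete_nonarch_abs abs)
  (hT : abs T = (q Fq)%:R)
  (hdense : kbar_dense emb abs T)
  (htT : tT ^+ (q Fq).-1 = - T)
  (Omega : nat -> C) (hOmega : is_Omega Fq abs T tT Omega)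
  (N : int) (OmegaN OmegaM1 : nat -> C)
  (hN : twist Fq N Omega OmegaN) (hM1 : twist Fq (-1) Omega OmegaM1)
  (r : nat -> C) (hr : forall i : nat, r i ^+ (q Fq ^ i) = T) :
  ((0 <= N)%R ->
     OmegaN = fps_mul (fun n => - Psi emb T `|N|%N (T ^- n.+1)) OmegaM1) /\
  ((N < 0)%R ->
     OmegaN = fps_mul (fun n => (\prod_(1 <= i < `|N|%N) ('X - (r i)%:P))`_n) OmegaM1).
Proof.
split; case: N hN => M hN // _.
- exact: (twist_Omega_nonneg emb habs hT htT hOmega hN hM1).
- exact: (twist_Omega_neg emb habs hT htT hOmega hN hM1 hr).
Qed.
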